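(* Let $a,b,c\in\mathbb{Z}$, let $A=\begin{pmatrix}0&a&-c\\-a&0&b\\c&-b&0\end{pmatrix}$, and consider the graded cluster algebra $\mathcal{A}\big((x_1,x_2,x_3),A,(b,c,a)\big)$. Let $[p_n,\dots,p_1]$ ($n\ge1$) be a mutation path without repetitions and let $z=\operatorname{var}_A[p_n,\dots,p_1]$. Writing $P=A_{[p_n,\dots,p_1]}$, we have $\deg(z)=(-1)^{n+1}P_{32}$ if $p_n=1$, $\deg(z)=(-1)^{n}P_{31}$ if $p_n=2$, and $\deg(z)=(-1)^{n+1}P_{21}$ if $p_n=3$.
   Context: Matrix mutation: for a $3\times3$ skew-symmetric integer matrix $B=(b_{ij})$, $\mu_k(B)=(b'_{ij})$ with $b'_{ij}=-b_{ij}$ if $i=k$ or $j=k$, $b'_{ij}=b_{ij}+\operatorname{sgn}(b_{ik})\max(b_{ik}b_{kj},0)$ otherwise. A seed $((x_1,x_2,x_3),B)$ mutates in direction $k$ to $(x',\mu_k B)$ with $x'_j=x_j$ ($j\ne k$) and $x'_k=\big(\prod_{b_{ik}>0}x_i^{b_{ik}}+\prod_{b_{ik}<0}x_i^{-b_{ik}}\big)/x_k$. Grading: $\deg x_i=g_i$ with $Bg=0$; under mutation at $k$ the degree vector becomes $g'$ with $g'_j=g_j$ ($j\neq k$), $g'_k=-g_k+\sum_{b_{ik}>0}b_{ik}g_i$, and cluster variables are homogeneous of these degrees. A mutation path $[p_n,\dots,p_1]$ means mutate first at $p_1$, then $p_2$, ..., finally $p_n$; it is without repetitions if $p_{i+1}\ne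 p_i$ for all $i$. $A_{[p_n,\dots,p_1]}=\mu_{p_n}\cdots\mu_{p_1}(A)$, and $\operatorname{var}_A[p_n,\dots,p_1]$ is the cluster variable newly created by the final mutation $\mu_{p_n}$ along this path starting from the initial seed. *)

From HB Require Import structures.
From mathcomp Require Import all_boot all_order all_algebra.
Set Implicit Arguments. Unset Strict Implicit. Unset Printing Implicit Defensive.
Import Order.TTheory GRing.Theory Num.Theory.
Local Open Scope ring_scope.

Definition mat_mut (k : 'I_3) (B : 'M[int]_3) : 'M[int]_3 :=
  \matrix_(i < 3, j < 3)
    if (i == k) || (j == k) then - B i j
    else B i j + Num.sg (B i k) * Num.max (B i k * B k j) 0.

(* Mutation of the degree vector g (indexed by 'I_3) in direction k w.r.t. B
   (the matrix BEFORE mutation). *)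
Definition deg_mut (k : 'I_3) (B : 'M[int]_3) (g : 'I_3 -> int) : 'I_3 -> int :=
  fun j => if j == k then - g k + \sum_(i < 3 | 0 < B i k) B i k * g i else g j.

(* A graded seed, forgetting the cluster: exchange matrix and degree vector. *)
Definition gseed := ('M[int]_3 * ('I_3 -> int))%type.

Definition gseed_mut (k : 'I_3) (s : gseed) : gseed :=
  (mat_mut k s.1, deg_mut k s.1 s.2).

(* A mutation path [p_n, ..., p_1] is the list [:: p_n; ...; p_1];
   p_1 is applied first. *)
Definition gseed_path (ps : seq 'I_3) (s : gseed) : gseed := foldr gseed_mut s ps.

Definition mat_path (ps : seq 'I_3) (B : 'M[int]_3) : 'M[int]_3 :=
  foldr mat_mut B ps.

(* Without repetitions: consecutive entries differ. *)
Definition no_rep (ps : seq 'I_3) : bool :=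
  if ps is p :: ps' then path (fun x y => x != y) p ps' else true.

Definition Amat (a b c : int) : 'M[int]_3 :=
  \matrix_(i < 3, j < 3)
    match nat_of_ord i, nat_of_ord j with
    | 0, 1 => a | 0, 2 => - c
    | 1, 0 => - a | 1, 2 => b
    | 2, 0 => c | 2, 1 => - b
    | _, _ => 0
    end.

Definition gvec (g1 g2 g3 : int) : 'I_3 -> int :=
  fun i => match nat_of_ord i with 0 => g1 | 1 => g2 | _ => g3 end.

(* Degree of var_A[p_n,...,p_1]: the new cluster variable created by the last
   mutation mu_{p_n} sits at position p_n; its degree is the p_n-th entry of the
   degree vector of the final graded seed. For the empty path we return 0
   (irrelevant: the theorem assumes n >= 1). *)
Definition deg_var (B : 'M[int]_3) (g : 'I_3 -> int) (ps : seq 'I_3) : int :=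
  if ps is p :: _ then (gseed_path ps (B, g)).2 p else 0.

(* Every matrix B mutation-equivalent to A(a,b,c) is skew-symmetric, hence again
   of the form A(x,y,z), and the vector (B_23, B_31, B_12) spans its kernel; for
   A(a,b,c) this vector is the grading (b,c,a).
   A single mutation mu_k sends the kernel vector of B to minus the kernel vector
   of mu_k B (a three-case computation with the sign/max term of matrix mutation),
   and the degree mutation is linear.  So along any path of length n the degree
   vector is (-1)^n times the kernel vector of P, and the degree of the new
   variable is its p_n-th entry, which skew-symmetry rewrites as stated. *)

From HB Require Import structures.
From mathcomp Require Import all_boot all_order all_algebra zify.
Import Order.TTheory GRing.Theory Num.Theory.
Local Open Scope ring_scope.

Lemma sgr_max_mulC (R : realDomainType) (x y : R) :
  Num.sg x * Num.max (x * y) 0 = Num.sg y * Num.max (x * y) 0.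
Proof.
case: (ler0P (x * y)) => [_ | xy_gt0]; first by rewrite !mulr0.
have [x_gt0 | x_lt0 | x0] := ltrgt0P x; last by rewrite x0 mul0r ltxx in xy_gt0.
- by rewrite gtr0_sg // gtr0_sg // -(pmulr_rgt0 y x_gt0).
- by rewrite ltr0_sg // ltr0_sg // -(nmulr_rgt0 y x_lt0).
Qed.

Lemma skewE {B : 'M[int]_3} : B^T = - B -> forall i j, B j i = - B i j.
Proof. by move=> skewB i j; have /matrixP/(_ i j) := skewB; rewrite !mxE. Qed.

Lemma mat_mut_skew (k : 'I_3) (B : 'M[int]_3) :
  B^T = - B -> (mat_mut k B)^T = - mat_mut k B.
Proof.
move/skewE=> Bji; apply/matrixP=> i j; rewrite !mxE orbC (Bji i j).
case: ifP => // _.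
by rewrite (Bji k j) (Bji i k) mulrNN sgrN (mulrC (B k j)) sgr_max_mulC opprD mulNr.
Qed.

Lemma Amat_skew (x y z : int) : (Amat x y z)^T = - Amat x y z.
Proof.
by apply/matrixP=> i j; rewrite !mxE; case: i j => [[|[|[|?]]] ?] [[|[|[|?]]] ?];
  rewrite /= ?opprK ?oppr0.
Qed.

Lemma skew3_Amat (B : 'M[int]_3) : B^T = - B -> exists x y z, B = Amat x y z.
Proof.
move/skewE=> Bji; have Bii i : B i i = 0 by have := Bji i i; lia.
exists (B (inord 0) (inord 1)), (B (inord 1) (inord 2)), (B (inord 2) (inord 0)).
apply/matrixP=> i j; rewrite mxE -[i]inord_val -[j]inord_val.
case: i j => [[|[|[|?]]] ?] // [[|[|[|?]]] ?] //=; rewrite !inordK //.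
all: exact: Bii.
Qed.

Definition kervec (B : 'M[int]_3) : 'I_3 -> int :=
  gvec (B (inord 1) (inord 2)) (B (inord 2) (inord 0)) (B (inord 0) (inord 1)).

Lemma kervec_Amat (x y z : int) : kervec (Amat x y z) = gvec y z x.
Proof. by rewrite /kervec !mxE !inordK. Qed.

Lemma deg_mutZ (k : 'I_3) (B : 'M[int]_3) {e : int} {g g' : 'I_3 -> int} :
  g' =1 (fun i => e * g i) -> deg_mut k B g' =1 (fun j => e * deg_mut k B g j).
Proof.
move=> eq_g j; rewrite /deg_mut; case: ifP => // _.
rewrite eq_g mulrDr mulrN big_distrr; congr (_ + _).
by apply: eq_bigr => i _; rewrite eq_g mulrCA.
Qed.

(* The two nonzero summands of [deg_mut k (Amat x y z) (kervec _) k]: the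
   entries of column [k] are [- a] and [b], those of the kernel vector [b] and [a]. *)
Lemma pos_part_sum (a b : int) :
  (if 0 < - a then - a * b else 0) + (if 0 < b then b * a else 0)
  = Num.sg a * Num.max (a * b) 0.
Proof.
have [a_gt0 | a_lt0 | ->] := ltrgt0P a.
- rewrite gtr0_sg //.
  by case: (ler0P (a * b)); case: (ltrP 0 (- a)); case: (ltrP 0 b); nia.
- rewrite ltr0_sg //.
  by case: (ler0P (a * b)); case: (ltrP 0 (- a)); case: (ltrP 0 b); nia.
- by rewrite oppr0 ltxx sgr0 mul0r mulr0 if_same addr0.
Qed.

Lemma deg_mut_kervec (k : 'I_3) (B : 'M[int]_3) :
  B^T = - B -> deg_mut k B (kervec B) =1 (fun j => - kervec (mat_mut k B) j).
Proof.
move=> /skew3_Amat [x [y [z ->]]] j.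
rewrite kervec_Amat /kervec /deg_mut /mat_mut /gvec.
case: k j => [[|[|[|?]]] ?] // [[|[|[|?]]] ?] //=.
all: rewrite ?big_mkcond ?big_ord_recl ?big_ord0 /= !mxE -!val_eqE /= !inordK //=.
all: rewrite ?opprK // !add0r ?addr0 mulrNN sgrN.
2: rewrite [X in _ + X]addrC.
all: by rewrite pos_part_sum opprD mulNr opprK.
Qed.

Lemma gseed_path_kervec (ps : seq 'I_3) (B : 'M[int]_3) :
  B^T = - B ->
  let s := gseed_path ps (B, kervec B) in
  s.1^T = - s.1 /\ s.2 =1 (fun j => (-1) ^+ size ps * kervec s.1 j).
Proof.
move=> skewB; elim: ps => [|p ps [skew_s deg_s]] /=.
  by split=> // j; rewrite expr0 mul1r.
split; first exact: mat_mut_skew.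
by move=> j; rewrite (deg_mutZ _ _ deg_s) deg_mut_kervec // exprS mulN1r mulrN mulNr.
Qed.

Lemma mat_path_gseed (ps : seq 'I_3) (B : 'M[int]_3) (g : 'I_3 -> int) :
  mat_path ps B = (gseed_path ps (B, g)).1.
Proof. by elim: ps => //= p ps ->. Qed.

Theorem mainTheorem10 (a b c : int) (pn : 'I_3) (rest : seq 'I_3) :
  no_rep (pn :: rest) ->
  let A := Amat a b c in
  let P := mat_path (pn :: rest) A in
  let n := size (pn :: rest) in
  let z_deg := deg_var A (gvec b c a) (pn :: rest) in
    ((nat_of_ord pn = 0%N -> z_deg = (-1) ^+ n.+1 * P (inord 2) (inord 1)) /\
     (nat_of_ord pn = 1%N -> z_deg = (-1) ^+ n * P (inord 2) (inord 0)) /\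
     (nat_of_ord pn = 2%N -> z_deg = (-1) ^+ n.+1 * P (inord 1) (inord 0))).
Proof.
move=> _ A P n z_deg.
have [] := gseed_path_kervec (pn :: rest) _ (Amat_skew a b c).
rewrite -mat_path_gseed -/A -/P => skewP deg_z.
have -> : z_deg = (-1) ^+ n * kervec P pn by rewrite /z_deg /deg_var -kervec_Amat -/A deg_z.
rewrite /kervec /gvec (skewE skewP (inord 2) (inord 1)) (skewE skewP (inord 1) (inord 0)).
by split; [|split] => -> //; rewrite exprS mulN1r mulrN mulNr.
Qed.
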